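(* In either the full model or the toy model (see context) with a fixed environment $\vec\alpha$, let $\vec m^1\le\vec m^2$ (componentwise) be two configurations with well coordinates $\tilde y^1,\tilde y^2$ computed at $F=0$, and let $\vec m^{1*},\vec m^{2*}$ be the results of applying the zero-force avalanche (ZFA) to each. (i) If $\max_i\tilde y^1_i>\max_i\tilde y^2_i$, then $\vec m^{1*}\le\vec m^2$. (ii) If $\max_i\tilde y^1_i=\max_i\tilde y^2_i$ and $m^1_j<m^2_j$ for $j=\arg\max_i\tilde y^1_i$, then $\vec m^{1*}\le\vec m^2$. (iii) If $\max_i\tilde y^1_i\ge\max_i\tilde y^2_i$, then $\vec m^{1*}\le\vec m^{2*}$.
   Context: Setting: $L$ particles with periodic boundary conditions; indices mod $L$, sequences $L$-periodic. Disorder $\alpha_0,\dots,\alpha_{L-1}$ i.i.d. uniform on $(-\tfrac12,\tfrac12)$; $\lambda>0$, $\eta=\frac{2}{2+\lambda+\sqrt{\lambda^2+4\lambda}}\in(0,1)$; $\Delta x_i=x_{i-1}-2x_i+x_{i+1}$ (periodic). A configuration is $\vec m\in\mathbb Z^L$; its well coordinates at force $F=0$ are, for the full model, $\tilde y_i=\frac{\eta}{1-\eta^2}\sum_{j\in\mathbb Z}\eta^{|i-j|}(\Delta m_j+\Delta\alpha_j)$ (periodic extension), and for the toy model $\tilde y_i=\eta(\Delta m_i+\Delta\alpha_i)$. A jump at site $j$ means $m_j\to m_j+1$ (with periodic copies), which changes well coordinates as: full model, $\tilde y_j\to\tilde y_j-\frac{2\eta}{1+\eta}+\frac{1-\eta}{1+\eta}\frac{2\eta^L}{1-\eta^L}$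 and $\tilde y_i\to\tilde y_i+\frac{1-\eta}{1+\eta}\frac{\eta^{i-j}+\eta^{L-(i-j)}}{1-\eta^L}$ for $j<i<j+L$; toy model, $\tilde y_j\to\tilde y_j-2\eta$, $\tilde y_{j\pm1}\to\tilde y_{j\pm1}+\eta$. Zero-force avalanche (ZFA) applied to $\vec m$: (ZFA1) set $\vec m^*=\vec m$; (ZFA2) record $\tilde y_{\max}=\max_i\tilde y_i$; (ZFA3) let $j=\arg\max_i\tilde y^*_i$ and jump site $j$, updating $\vec m^*,\tilde y^*$; (ZFA4) if $\tilde y^*_i>\tilde y_{\max}$ for some $i$, go to (ZFA3); otherwise output $\vec m^*$. *)

From Stdlib Require Import Reals Lra Lia ZArith Arith.
Open Scope R_scope.

Definition eta (lam : R) : R := 2 / (2 + lam + sqrt (lam ^ 2 + 4 * lam)).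

Definition prv (L i : nat) : nat := ((i + (L - 1)) mod L)%nat.
Definition nxt (L i : nat) : nat := ((i + 1) mod L)%nat.

Definition lapR (L : nat) (x : nat -> R) (i : nat) : R :=
  x (prv L i) - 2 * x i + x (nxt L i).

Fixpoint sumL (f : nat -> R) (n : nat) : R :=
  match n with O => 0 | S k => sumL f k + f k end.

Fixpoint maxupto (f : nat -> R) (n : nat) : R :=
  match n with O => f O | S k => Rmax (maxupto f k) (f (S k)) end.
Definition maxL (f : nat -> R) (L : nat) : R := maxupto f (L - 1).

(** Configurations m in Z^L, represented as functions nat -> Z (only i < L matter). *)
Definition config := nat -> Z.

Definition cfg_le (L : nat) (m1 m2 : config) : Prop :=
  forall i, (i < L)%nat -> (m1 i <= m2 i)%Z.

Inductive model := FullModel | ToyModel.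

(** Periodization of the kernel: for 0 <= d < L,
    sum_{n in Z} eta^{|d + nL|} = (eta^d + eta^(L-d)) / (1 - eta^L). *)
Definition kern (e : R) (L d : nat) : R := (e ^ d + e ^ (L - d)) / (1 - e ^ L).

(** Well coordinates at F = 0.
    Full model: y_i = eta/(1-eta^2) sum_{j in Z} eta^{|i-j|} (Δm_j + Δα_j)
    (periodic extension), written via the periodized kernel. *)
Definition ytil (md : model) (L : nat) (lam : R) (alpha : nat -> R)
    (m : config) (i : nat) : R :=
  let e := eta lam in
  let s := fun k => lapR L (fun l => IZR (m l)) k + lapR L alpha k in
  match md with
  | FullModel => e / (1 - e ^ 2) * sumL (fun k => s k * kern e L ((i + L - k) mod L)) L
  | ToyModel => e * s i
  end.

Definition jump (m : config) (j : nat) : config :=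
  fun i => if Nat.eqb i j then (m i + 1)%Z else m i.

(** Steps ZFA3/ZFA4 of the zero-force avalanche, with the recorded value ymax
    (ZFA2).  [zfa_loop ... ymax m ms]: starting at the current state m (just after
    a jump), the algorithm outputs ms. *)
Inductive zfa_loop (md : model) (L : nat) (lam : R) (alpha : nat -> R) (ymax : R)
  : config -> config -> Prop :=
| zfa_stop : forall m,
    (forall i, (i < L)%nat -> ytil md L lam alpha m i <= ymax) ->
    zfa_loop md L lam alpha ymax m m
| zfa_step : forall m j ms,
    (exists i, (i < L)%nat /\ ytil md L lam alpha m i > ymax) ->
    (j < L)%nat ->
    ytil md L lam alpha m j = maxL (ytil md L lam alpha m) L ->
    zfa_loop md L lam alpha ymax (jump m j) ms ->
    zfa_loop md L lam alpha ymax m ms.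

(** ZFA applied to m outputs ms: (ZFA1) m* = m; (ZFA2) record ymax;
    (ZFA3) jump at the argmax; then loop (ZFA4). *)
Definition ZFA (md : model) (L : nat) (lam : R) (alpha : nat -> R)
    (m ms : config) : Prop :=
  exists j, (j < L)%nat /\
    ytil md L lam alpha m j = maxL (ytil md L lam alpha m) L /\
    zfa_loop md L lam alpha (maxL (ytil md L lam alpha m) L) (jump m j) ms.

(** Genericity of the environment (holds almost surely for i.i.d. uniform α):
    for every configuration the well coordinates at distinct sites differ, so
    the argmax used in the ZFA is unique. *)
Definition generic (md : model) (L : nat) (lam : R) (alpha : nat -> R) : Prop :=
  forall (m : config) i k, (i < L)%nat -> (k < L)%nat ->
    ytil md L lam alpha m i = ytil md L lam alpha m k -> i = k.

From Stdlib Require Import Reals ZArith Arith Lra Lia.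
Open Scope R_scope.

(* Raising [m] at a site [k <> i] never lowers the well coordinate at [i]: a jump changes
   the source [Δm] by the Laplacian of a unit vector, which the convex periodized kernel
   (full model) or the nearest-neighbour stencil (toy model) turns into a nonnegative
   increment away from [k].  Hence if [m <= M], and some site of [m] lies above the recorded
   maximum while [ỹ(M)] does not, the site where [m] is maximal has [ỹ(m)_j > ỹ(M)_j] and
   therefore [m_j < M_j]: every jump of the avalanche keeps [m <= M].  Parts (i)-(iii)
   apply this with [M = m2] or [M = m2*], genericity identifying the argmax when the two
   maxima coincide. *)

Lemma eta_bounds lam : 0 < lam -> 0 < eta lam < 1.
Proof.
  intros Hlam. unfold eta. pose proof (sqrt_pos (lam ^ 2 + 4 * lam)).
  split.
  - apply Rdiv_lt_0_compat; lra.
  - apply (Rmult_lt_reg_r (2 + lam + sqrt (lam ^ 2 + 4 * lam))); [lra|].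
    unfold Rdiv. rewrite Rmult_assoc, Rinv_l by lra. lra.
Qed.

Lemma sumL_ext f g n : (forall l, (l < n)%nat -> f l = g l) -> sumL f n = sumL g n.
Proof.
  induction n as [|n IH]; intros H; simpl; [reflexivity|].
  rewrite IH by (intros; apply H; lia). rewrite H by lia. reflexivity.
Qed.

Lemma sumL_add f g n : sumL (fun l => f l + g l) n = sumL f n + sumL g n.
Proof. induction n as [|n IH]; simpl; [lra|rewrite IH; lra]. Qed.

Lemma sumL_scal c f n : sumL (fun l => c * f l) n = c * sumL f n.
Proof. induction n as [|n IH]; simpl; [lra|rewrite IH; lra]. Qed.

Lemma sumL_indicator g a n :
  sumL (fun l => if Nat.eqb l a then g l else 0) n = if Nat.ltb a n then g a else 0.
Proof.
  induction n as [|n IH]; simpl; [reflexivity|]. rewrite IH.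
  destruct (Nat.eqb_spec n a), (Nat.ltb_spec a n), (Nat.ltb_spec a (S n));
    subst; try lia; lra.
Qed.

Lemma nxt_spec L k : (k < L)%nat ->
  ((k + 1 < L)%nat /\ nxt L k = (k + 1)%nat) \/ ((k + 1)%nat = L /\ nxt L k = 0%nat).
Proof.
  intros Hk. unfold nxt. destruct (Nat.eq_dec (k + 1) L) as [E|E].
  - right. rewrite E, Nat.Div0.mod_same. auto.
  - left. rewrite Nat.mod_small; lia.
Qed.

Lemma prv_spec L k : (k < L)%nat ->
  (k = 0%nat /\ prv L k = (L - 1)%nat) \/ ((0 < k)%nat /\ prv L k = (k - 1)%nat).
Proof.
  intros Hk. unfold prv. destruct k as [|k].
  - left. rewrite Nat.mod_small; lia.
  - right. replace (S k + (L - 1))%nat with (k + 1 * L)%nat by lia.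
    rewrite Nat.Div0.mod_add, Nat.mod_small; lia.
Qed.

Lemma nxt_lt L k : (1 <= L)%nat -> (nxt L k < L)%nat.
Proof. intros. apply Nat.mod_upper_bound. lia. Qed.

Lemma prv_lt L k : (1 <= L)%nat -> (prv L k < L)%nat.
Proof. intros. apply Nat.mod_upper_bound. lia. Qed.

Lemma prv_eq_iff L l k : (l < L)%nat -> (k < L)%nat -> prv L l = k <-> l = nxt L k.
Proof.
  intros Hl Hk. destruct (prv_spec L l Hl) as [[? ->]|[? ->]];
    destruct (nxt_spec L k Hk) as [[? ->]|[? ->]]; lia.
Qed.

Lemma nxt_eq_iff L l k : (l < L)%nat -> (k < L)%nat -> nxt L l = k <-> l = prv L k.
Proof.
  intros Hl Hk. destruct (nxt_spec L l Hl) as [[? ->]|[? ->]];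
    destruct (prv_spec L k Hk) as [[? ->]|[? ->]]; lia.
Qed.

Lemma offset_mod L i x : (i < L)%nat -> (x < L)%nat ->
  ((i + L - x) mod L = if Nat.leb x i then i - x else i + L - x)%nat.
Proof.
  intros Hi Hx. destruct (Nat.leb_spec x i).
  - replace (i + L - x)%nat with ((i - x) + 1 * L)%nat by lia.
    rewrite Nat.Div0.mod_add. apply Nat.mod_small. lia.
  - apply Nat.mod_small. lia.
Qed.

Lemma succ_mod L d : (d < L)%nat -> ((d + 1) mod L = if Nat.eqb (d + 1) L then 0 else d + 1)%nat.
Proof.
  intros Hd. destruct (Nat.eqb_spec (d + 1) L) as [->|].
  - apply Nat.Div0.mod_same.
  - apply Nat.mod_small. lia.
Qed.

Lemma offset_neighbours L i k : (i < L)%nat -> (k < L)%nat -> i <> k ->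
  let d := ((i + L - k) mod L)%nat in
  (1 <= d < L)%nat /\ ((i + L - nxt L k) mod L = d - 1)%nat /\
  ((i + L - prv L k) mod L = (d + 1) mod L)%nat.
Proof.
  intros Hi Hk Hik d. subst d.
  assert (HL : (1 <= L)%nat) by lia.
  rewrite succ_mod by (apply Nat.mod_upper_bound; lia).
  rewrite (offset_mod L i k), (offset_mod L i (nxt L k)), (offset_mod L i (prv L k))
    by auto using nxt_lt, prv_lt.
  destruct (nxt_spec L k Hk) as [[? ->]|[? ->]];
    destruct (prv_spec L k Hk) as [[? ->]|[? ->]];
    repeat match goal with
    | |- context [Nat.leb ?a ?b] => destruct (Nat.leb_spec a b)
    | |- context [Nat.eqb ?a ?b] => destruct (Nat.eqb_spec a b)
    end; lia.
Qed.

Lemma kern_0 e L : kern e L 0 = kern e L L.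
Proof. unfold kern. rewrite Nat.sub_diag, Nat.sub_0_r. simpl. lra. Qed.

Lemma kern_succ_mod e L d : (d < L)%nat -> kern e L ((d + 1) mod L) = kern e L (d + 1).
Proof.
  intros Hd. rewrite succ_mod by exact Hd.
  destruct (Nat.eqb_spec (d + 1) L) as [->|]; [apply kern_0|reflexivity].
Qed.

Lemma kern_second_difference e L d : 0 < e < 1 -> (1 <= d < L)%nat ->
  kern e L (d - 1) - 2 * kern e L d + kern e L (d + 1)
  = (1 - e) ^ 2 * (e ^ (d - 1) + e ^ (L - d - 1)) / (1 - e ^ L).
Proof.
  intros He Hd. unfold kern.
  assert (e ^ L < 1) by (apply pow_lt_1_compat; lra || lia).
  replace (L - (d - 1))%nat with (S (S (L - d - 1))) by lia.
  replace (L - d)%nat with (S (L - d - 1)) by lia.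
  replace (L - (d + 1))%nat with (L - d - 1)%nat by lia.
  replace (d + 1)%nat with (S (S (d - 1))) by lia.
  replace (e ^ d) with (e ^ S (d - 1)) by (f_equal; lia).
  set (t := (d - 1)%nat). set (u := (L - d - 1)%nat). simpl. rewrite !Nat.sub_0_r. field. lra.
Qed.

Lemma kern_convex e L d : 0 < e < 1 -> (1 <= d < L)%nat ->
  0 <= kern e L (d - 1) - 2 * kern e L d + kern e L (d + 1).
Proof.
  intros He Hd. rewrite kern_second_difference by assumption.
  assert (e ^ L < 1) by (apply pow_lt_1_compat; lra || lia).
  pose proof (pow_lt e (d - 1) (proj1 He)). pose proof (pow_lt e (L - d - 1) (proj1 He)).
  apply Rle_mult_inv_pos; [|lra].
  apply Rmult_le_pos; [apply pow2_ge_0|lra].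
Qed.

Definition unit_at (k l : nat) : R := if Nat.eqb l k then 1 else 0.

Lemma lapR_add L f g i : lapR L (fun l => f l + g l) i = lapR L f i + lapR L g i.
Proof. unfold lapR. ring. Qed.

Lemma lapR_ext L f g i : (1 <= L)%nat -> (i < L)%nat ->
  (forall l, (l < L)%nat -> f l = g l) -> lapR L f i = lapR L g i.
Proof. intros HL Hi H. unfold lapR. rewrite !H; auto using prv_lt, nxt_lt. Qed.

Lemma IZR_jump m k l : IZR (jump m k l) = IZR (m l) + unit_at k l.
Proof.
  unfold jump, unit_at. destruct (Nat.eqb l k); [rewrite plus_IZR|]; simpl; ring.
Qed.

Lemma sumL_lapR_unit_at L k (K : nat -> R) : (1 <= L)%nat -> (k < L)%nat ->
  sumL (fun l => lapR L (unit_at k) l * K l) L = K (nxt L k) - 2 * K k + K (prv L k).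
Proof.
  intros HL Hk.
  rewrite (sumL_ext _ (fun l => (if Nat.eqb l (nxt L k) then K l else 0) +
      (-2) * (if Nat.eqb l k then K l else 0) +
      (if Nat.eqb l (prv L k) then K l else 0))).
  2:{ intros l Hl. pose proof (prv_eq_iff L l k Hl Hk). pose proof (nxt_eq_iff L l k Hl Hk).
      unfold lapR, unit_at.
      destruct (Nat.eqb_spec (prv L l) k), (Nat.eqb_spec l (nxt L k)),
        (Nat.eqb_spec l k), (Nat.eqb_spec (nxt L l) k), (Nat.eqb_spec l (prv L k));
        try tauto; lra. }
  rewrite !sumL_add, sumL_scal, !sumL_indicator.
  pose proof (nxt_lt L k HL). pose proof (prv_lt L k HL).
  destruct (Nat.ltb_spec (nxt L k) L), (Nat.ltb_spec (prv L k) L), (Nat.ltb_spec k L);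
    try lia; lra.
Qed.

Section WellCoordinates.

Variables (md : model) (L : nat) (lam : R) (alpha : nat -> R).
Hypotheses (HL : (1 <= L)%nat) (Hlam : 0 < lam).

Local Notation y := (ytil md L lam alpha).

Lemma ytil_ext m m' i : (i < L)%nat ->
  (forall l, (l < L)%nat -> m l = m' l) -> y m i = y m' i.
Proof.
  intros Hi H.
  assert (Hs : forall l, (l < L)%nat ->
    lapR L (fun l => IZR (m l)) l = lapR L (fun l => IZR (m' l)) l).
  { intros l Hl. apply lapR_ext; auto. intros ? ?. rewrite H; auto. }
  destruct md; simpl.
  - f_equal. apply sumL_ext. intros l Hl. rewrite Hs; auto.
  - rewrite Hs; auto.
Qed.

Lemma ytil_jump_ge m k i : (k < L)%nat -> (i < L)%nat -> i <> k ->
  y m i <= y (jump m k) i.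
Proof.
  intros Hk Hi Hik. pose proof (eta_bounds lam Hlam) as He.
  assert (Hsrc : forall l, lapR L (fun l => IZR (jump m k l)) l =
                           lapR L (fun l => IZR (m l)) l + lapR L (unit_at k) l).
  { intros l. rewrite <- lapR_add. unfold lapR. rewrite !IZR_jump. reflexivity. }
  destruct md; unfold ytil; cbv zeta.
  - set (e := eta lam) in *.
    set (K := fun l => kern e L ((i + L - l) mod L)).
    rewrite (sumL_ext
      (fun l => (lapR L (fun l => IZR (jump m k l)) l + lapR L alpha l) * K l)
      (fun l => (lapR L (fun l => IZR (m l)) l + lapR L alpha l) * K l
                + lapR L (unit_at k) l * K l))
      by (intros l _; rewrite Hsrc; ring).
    rewrite sumL_add, sumL_lapR_unit_at by assumption. unfold K.
    destruct (offset_neighbours L i k Hi Hk Hik) as (Hd & -> & ->).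
    rewrite kern_succ_mod by lia.
    pose proof (kern_convex e L _ He Hd).
    assert (0 < e / (1 - e ^ 2)) by (apply Rdiv_lt_0_compat; simpl; nra).
    nra.
  - rewrite Hsrc. unfold lapR, unit_at.
    destruct (Nat.eqb_spec i k); [contradiction|].
    destruct (Nat.eqb (prv L i) k), (Nat.eqb (nxt L i) k); nra.
Qed.


Lemma ytil_raise_ge n m m' k i : (k < L)%nat -> (i < L)%nat -> i <> k ->
  m' k = (m k + Z.of_nat n)%Z -> (forall l, (l < L)%nat -> l <> k -> m' l = m l) ->
  y m i <= y m' i.
Proof.
  intros Hk Hi Hik. revert m.
  induction n as [|n IH]; intros m Hmk Hml.
  - right. apply ytil_ext; auto. intros l Hl.
    destruct (Nat.eq_dec l k) as [->|]; [lia|symmetry; auto].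
  - apply Rle_trans with (y (jump m k) i); [apply ytil_jump_ge; auto|].
    apply IH; unfold jump.
    + rewrite Nat.eqb_refl. lia.
    + intros l Hl Hlk. rewrite (proj2 (Nat.eqb_neq l k) Hlk). auto.
Qed.

Lemma ytil_mono m1 m2 i : cfg_le L m1 m2 -> (i < L)%nat -> m1 i = m2 i ->
  y m1 i <= y m2 i.
Proof.
  intros Hle Hi Heq.
  set (splice := fun p : nat => (fun l => if Nat.ltb l p then m2 l else m1 l) : config).
  assert (Hp : forall p, y m1 i <= y (splice p) i).
  { induction p as [|p IH]; [right; reflexivity|].
    apply Rle_trans with (y (splice p) i); [exact IH|].
    destruct (Nat.lt_ge_cases p L) as [HpL|HpL]; [destruct (Nat.eq_dec i p) as [->|Hip]|].
    - right. apply ytil_ext; auto. intros l Hl. unfold splice.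
      destruct (Nat.ltb_spec l p), (Nat.ltb_spec l (S p)); try lia.
      replace l with p by lia. auto.
    - apply (ytil_raise_ge (Z.to_nat (m2 p - m1 p)) (splice p) (splice (S p)) p); auto.
      + unfold splice. rewrite Nat.ltb_irrefl, (proj2 (Nat.ltb_lt p (S p))) by lia.
        specialize (Hle p HpL). lia.
      + intros l _ Hlp. unfold splice.
        destruct (Nat.ltb_spec l p), (Nat.ltb_spec l (S p)); lia.
    - right. apply ytil_ext; auto. intros l Hl. unfold splice.
      destruct (Nat.ltb_spec l p), (Nat.ltb_spec l (S p)); lia. }
  apply Rle_trans with (y (splice L) i); [apply Hp|].
  right. apply ytil_ext; auto. intros l Hl. unfold splice.
  destruct (Nat.ltb_spec l L); lia.
Qed.


End WellCoordinates.

Lemma maxupto_ge f n i : (i <= n)%nat -> f i <= maxupto f n.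
Proof.
  induction n as [|n IH]; intros Hi; simpl.
  - replace i with 0%nat by lia. lra.
  - destruct (Nat.eq_dec i (S n)) as [->|]; [apply Rmax_r|].
    eapply Rle_trans; [apply IH; lia|apply Rmax_l].
Qed.

Lemma maxL_ge f n i : (i < n)%nat -> f i <= maxL f n.
Proof. intros. apply maxupto_ge. lia. Qed.

Lemma cfg_le_refl L m : cfg_le L m m.
Proof. intros i _. lia. Qed.

Lemma cfg_le_trans L m1 m2 m3 : cfg_le L m1 m2 -> cfg_le L m2 m3 -> cfg_le L m1 m3.
Proof. intros H12 H23 i Hi. specialize (H12 i Hi). specialize (H23 i Hi). lia. Qed.

Lemma cfg_le_jump L m j : cfg_le L m (jump m j).
Proof. intros i _. unfold jump. destruct (Nat.eqb i j); lia. Qed.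

Lemma jump_le L m M j : cfg_le L m M -> (m j < M j)%Z -> cfg_le L (jump m j) M.
Proof.
  intros Hle Hlt i Hi. unfold jump. destruct (Nat.eqb_spec i j) as [->|]; auto. lia.
Qed.

Lemma jump_le_jump L m M j : cfg_le L m M -> cfg_le L (jump m j) (jump M j).
Proof.
  intros Hle i Hi. specialize (Hle i Hi). unfold jump. destruct (Nat.eqb i j); lia.
Qed.

Section Avalanche.

Variables (md : model) (L : nat) (lam : R) (alpha : nat -> R).
Hypotheses (HL : (1 <= L)%nat) (Hlam : 0 < lam).

Local Notation y := (ytil md L lam alpha).

Lemma jump_le_of_ytil_lt m M j : cfg_le L m M -> (j < L)%nat -> y M j < y m j ->
  cfg_le L (jump m j) M.
Proof.
  intros Hle Hj Hy. apply jump_le; auto.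
  destruct (Z.lt_ge_cases (m j) (M j)) as [|Hge]; auto.
  assert (y m j <= y M j) by (apply ytil_mono; auto; specialize (Hle j Hj); lia).
  lra.
Qed.

Lemma zfa_loop_ge ymax m ms : zfa_loop md L lam alpha ymax m ms -> cfg_le L m ms.
Proof.
  induction 1; [apply cfg_le_refl|].
  eapply cfg_le_trans; [apply cfg_le_jump|eassumption].
Qed.

Lemma zfa_loop_ytil_le ymax m ms : zfa_loop md L lam alpha ymax m ms ->
  forall i, (i < L)%nat -> y ms i <= ymax.
Proof. induction 1; auto. Qed.

(* While some coordinate exceeds [ymax >= y M], the maximal one exceeds [y M] there,
   so the jump cannot overtake [M]. *)
Lemma zfa_loop_le ymax m ms M : zfa_loop md L lam alpha ymax m ms -> cfg_le L m M ->
  (forall i, (i < L)%nat -> y M i <= ymax) -> cfg_le L ms M.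
Proof.
  intros Hloop. induction Hloop as [|m j ms [i [Hi Hyi]] Hj Hmax _ IH];
    intros Hle HM; auto.
  apply IH; auto. apply jump_le_of_ytil_lt; auto.
  pose proof (maxL_ge (y m) L i Hi). pose proof (HM j Hj). lra.
Qed.

Lemma ZFA_ge m ms : ZFA md L lam alpha m ms -> cfg_le L m ms.
Proof.
  intros (j & _ & _ & Hloop).
  eapply cfg_le_trans; [apply cfg_le_jump|exact (zfa_loop_ge _ _ _ Hloop)].
Qed.

Lemma ZFA_ytil_le m ms : ZFA md L lam alpha m ms ->
  forall i, (i < L)%nat -> y ms i <= maxL (y m) L.
Proof. intros (j & _ & _ & Hloop). exact (zfa_loop_ytil_le _ _ _ Hloop). Qed.

Lemma ZFA_jump_le m ms j : generic md L lam alpha -> ZFA md L lam alpha m ms ->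
  (j < L)%nat -> y m j = maxL (y m) L -> cfg_le L (jump m j) ms.
Proof.
  intros Hgen (j' & Hj' & Hmax' & Hloop) Hj Hmax.
  replace j with j' by (apply (Hgen m); congruence).
  exact (zfa_loop_ge _ _ _ Hloop).
Qed.

Lemma ZFA_le m ms M : ZFA md L lam alpha m ms ->
  (forall j, (j < L)%nat -> y m j = maxL (y m) L -> cfg_le L (jump m j) M) ->
  (forall i, (i < L)%nat -> y M i <= maxL (y m) L) -> cfg_le L ms M.
Proof.
  intros (j & Hj & Hmax & Hloop) Hjump HM.
  exact (zfa_loop_le _ _ _ M Hloop (Hjump j Hj Hmax) HM).
Qed.

End Avalanche.

Theorem lemma1 (md : model) (L : nat) (lam : R) (alpha : nat -> R)
    (m1 m2 m1s : config) :
  (1 <= L)%nat -> 0 < lam ->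
  (forall i, (i < L)%nat -> -1/2 < alpha i < 1/2) ->
  generic md L lam alpha ->
  cfg_le L m1 m2 ->
  ZFA md L lam alpha m1 m1s ->
  (* (i) *)
  (maxL (ytil md L lam alpha m1) L > maxL (ytil md L lam alpha m2) L ->
     cfg_le L m1s m2) /\
  (* (ii) *)
  (forall j, (j < L)%nat ->
     maxL (ytil md L lam alpha m1) L = maxL (ytil md L lam alpha m2) L ->
     ytil md L lam alpha m1 j = maxL (ytil md L lam alpha m1) L ->
     (m1 j < m2 j)%Z ->
     cfg_le L m1s m2) /\
  (* (iii) *)
  (forall m2s : config, ZFA md L lam alpha m2 m2s ->
     maxL (ytil md L lam alpha m1) L >= maxL (ytil md L lam alpha m2) L ->
     cfg_le L m1s m2s).
Proof.
  intros HL Hlam _ Hgen Hle HZ1.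
  pose proof (maxL_ge (ytil md L lam alpha m2) L) as Hmax2.
  split; [|split].
  - intros Hgt. apply (ZFA_le md L lam alpha HL Hlam m1); auto.
    + intros j Hj Hmax. apply (jump_le_of_ytil_lt md L lam alpha); auto.
      pose proof (Hmax2 j Hj). lra.
    + intros i Hi. pose proof (Hmax2 i Hi). lra.
  - intros j Hj Heq Hmax Hlt. apply (ZFA_le md L lam alpha HL Hlam m1); auto.
    + intros j' Hj' Hmax'. replace j' with j by (apply (Hgen m1); congruence).
      apply jump_le; auto.
    + intros i Hi. pose proof (Hmax2 i Hi). lra.
  - intros m2s HZ2 Hge. apply (ZFA_le md L lam alpha HL Hlam m1); auto.
    + intros j Hj Hmax.
      destruct (Z.lt_ge_cases (m1 j) (m2 j)) as [Hlt|Hge_j].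
      * apply cfg_le_trans with m2; [apply jump_le; auto|].
        exact (ZFA_ge md L lam alpha m2 m2s HZ2).
      * (* Both configurations sit at the same height at [j], so [j] also maximizes [y m2]
           and the avalanche from [m2] jumps there first. *)
        assert (Hy : ytil md L lam alpha m1 j <= ytil md L lam alpha m2 j)
          by (apply (ytil_mono md L lam alpha); auto; specialize (Hle j Hj); lia).
        pose proof (Hmax2 j Hj).
        apply cfg_le_trans with (jump m2 j); [apply jump_le_jump; auto|].
        apply (ZFA_jump_le md L lam alpha m2); auto. lra.
    + intros i Hi. pose proof (ZFA_ytil_le md L lam alpha m2 m2s HZ2 i Hi). lra.
Qed.
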